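(* Let $f\in\mathbb{Z}_2[x]$, $n\ge2$, and let $\sigma=(x_1,\dots,x_k)$ be a growing $k$-cycle of $f_n$, with representatives $x_i\in\mathbb{Z}_2$. Put $a_n(x)=(f^k)'(x)$, $b_n(x)=(f^k(x)-x)/2^n$, $a_{n+1}(x)=(f^{2k})'(x)$, $b_{n+1}(x)=(f^{2k}(x)-x)/2^{n+1}$. Then for all $1\le i\le k$ and $t\in\{0,1\}$, $$a_{n+1}(x_i)\equiv1\pmod4,\qquad 2\,b_{n+1}(x_i+2^nt)\equiv b_n(x_i)\big(1+a_n(x_i)\big)\pmod4.$$
   Context: $f_n$ is the induced map on $\mathbb{Z}/2^n\mathbb{Z}$, $f_n(x\bmod 2^n)=f(x)\bmod 2^n$. A $k$-cycle of $f_n$ is a tuple of distinct elements $x_1,\dots,x_k$ with $f_n(x_i)=x_{i+1}$, $f_n(x_k)=x_1$; it grows if $\{y\in\mathbb{Z}/2^{n+1}\mathbb{Z}:y\bmod 2^n\in\sigma\}$ is a single cycle of $f_{n+1}$, of length $2k$. *)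

From HB Require Import structures.
From mathcomp Require Import all_boot all_order all_algebra.
From mathcomp Require Import boolp.
Set Implicit Arguments. Unset Strict Implicit. Unset Printing Implicit Defensive.
Import Order.TTheory GRing.Theory Num.Theory.
Local Open Scope ring_scope.

(* The ring Z_2 of 2-adic integers, as the inverse limit of Z/2^n Z:         *)
(* an element is a sequence of integers (z2 x n) in [0, 2^n) with            *)
(* z2 x n = z2 x n.+1 mod 2^n.                                              *)

Definition pw2 (n : nat) : int := 2 ^+ n.

Record Z2 := MkZ2 {
  z2 : nat -> int;
  z2_coh : forall n, z2 n = modz (z2 n.+1) (pw2 n) }.

Lemma z2_eq (x y : Z2) : (forall n, z2 x n = z2 y n) -> x = y.
Proof.
case: x y => [x hx] [y hy] /= h.
have e : x = y by apply: funext.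
subst y; congr MkZ2; exact: Prop_irrelevance.
Qed.

Lemma pw2_modS (m : int) n : modz (modz m (pw2 n.+1)) (pw2 n) = modz m (pw2 n).
Proof.
rewrite [in RHS](divz_eq m (pw2 n.+1)) /pw2 exprS mulrA.
by rewrite modzMDl.
Qed.

Lemma z2_norm (x : Z2) n : modz (z2 x n) (pw2 n) = z2 x n.
Proof. by rewrite [z2 x n]z2_coh modz_mod. Qed.

Definition precoh (t : nat -> int) :=
  forall n, modz (t n.+1) (pw2 n) = modz (t n) (pw2 n).

Definition mkZ2 (t : nat -> int) (ht : precoh t) : Z2.
Proof.
refine (@MkZ2 (fun n => modz (t n) (pw2 n)) _).
by move=> n; rewrite pw2_modS ht.
Defined.

Lemma z2_precoh (x : Z2) : precoh (z2 x).
Proof. by move=> n; rewrite z2_norm -z2_coh. Qed.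

Lemma precoh_cst c : precoh (fun _ => c).
Proof. by []. Qed.

Lemma precoh_add (x y : Z2) : precoh (fun n => z2 x n + z2 y n).
Proof.
move=> n; rewrite -modzDm (z2_precoh x) (z2_precoh y).
by rewrite modzDm.
Qed.

Lemma precoh_mul (x y : Z2) : precoh (fun n => z2 x n * z2 y n).
Proof.
move=> n; rewrite -modzMm (z2_precoh x) (z2_precoh y).
by rewrite modzMm.
Qed.

Lemma precoh_opp (x : Z2) : precoh (fun n => - z2 x n).
Proof.
move=> n; rewrite -modzNm (z2_precoh x).
by rewrite modzNm.
Qed.

Definition z2zero : Z2 := mkZ2 (precoh_cst 0).
Definition z2one : Z2 := mkZ2 (precoh_cst 1).
Definition z2add (x y : Z2) : Z2 := mkZ2 (precoh_add x y).
Definition z2mul (x y : Z2) : Z2 := mkZ2 (precoh_mul x y).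
Definition z2opp (x : Z2) : Z2 := mkZ2 (precoh_opp x).

HB.instance Definition _ := gen_eqMixin Z2.
HB.instance Definition _ := gen_choiceMixin Z2.

Lemma z2addA : associative z2add.
Proof.
move=> x y z; apply: z2_eq => n /=.
by rewrite modzDml modzDmr addrA.
Qed.

Lemma z2addC : commutative z2add.
Proof. by move=> x y; apply: z2_eq => n /=; rewrite addrC. Qed.

Lemma z2add0 : left_id z2zero z2add.
Proof. by move=> x; apply: z2_eq => n /=; rewrite modzDml add0r z2_norm. Qed.

Lemma z2addN : left_inverse z2zero z2opp z2add.
Proof. by move=> x; apply: z2_eq => n /=; rewrite modzDml addNr. Qed.

HB.instance Definition _ := GRing.isZmodule.Build Z2 z2addA z2addC z2add0 z2addN.

Lemma z2mulA : associative z2mul.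
Proof.
move=> x y z; apply: z2_eq => n /=.
by rewrite modzMml modzMmr mulrA.
Qed.

Lemma z2mulC : commutative z2mul.
Proof. by move=> x y; apply: z2_eq => n /=; rewrite mulrC. Qed.

Lemma z2mul1 : left_id z2one z2mul.
Proof. by move=> x; apply: z2_eq => n /=; rewrite modzMml mul1r z2_norm. Qed.

Lemma z2mulDl : left_distributive z2mul z2add.
Proof.
move=> x y z; apply: z2_eq => n /=.
by rewrite modzMml modzDm mulrDl.
Qed.

Lemma z2one_neq0 : z2one != z2zero.
Proof.
apply/eqP => h; have := congr1 (fun u => z2 u 1) h.
by rewrite /= /pw2.
Qed.

HB.instance Definition _ :=
  GRing.Zmodule_isComNzRing.Build Z2 z2mulA z2mulC z2mul1 z2mulDl z2one_neq0.

Definition eqm (m : nat) (u v : Z2) : Prop := exists c : Z2, u - v = 2 ^+ m * c.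

Definition fiter (k : nat) (f : {poly Z2}) : {poly Z2} :=
  iter k (fun g => f \Po g) 'X.

Definition is_cycle (m : nat) (f : {poly Z2}) (x : nat -> Z2) (k : nat) : Prop :=
  (0 < k)%N /\
  (forall i j, (i < k)%N -> (j < k)%N -> eqm m (x i) (x j) -> i = j) /\
  (forall i, (i < k)%N -> eqm m f.[x i] (x ((i.+1 %% k)%N))).

(* The k-cycle of f_n represented by x grows: the set of residues
   y mod 2^(n+1) with y mod 2^n in the cycle is a single cycle of f_(n+1)
   of length 2k. *)
Definition grows (n : nat) (f : {poly Z2}) (x : nat -> Z2) (k : nat) : Prop :=
  exists y : nat -> Z2,
    is_cycle n.+1 f y (k.*2) /\
    (forall z : Z2, (exists2 i, (i < k)%N & eqm n z (x i)) <->
                    (exists2 j, (j < k.*2)%N & eqm n.+1 z (y j))).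

From HB Require Import structures.
From mathcomp Require Import all_boot all_order all_algebra.
From mathcomp Require Import ring zify.
Import Order.TTheory GRing.Theory Num.Theory.
Set Implicit Arguments. Unset Strict Implicit.
Local Open Scope ring_scope.

(* Let g = f^k and a = g'(x_i).  Growth forces a to be odd: if a were even,
   g(x_i + 2^n) = g(x_i) (mod 2^(n+1)), so the two lifts x_i and x_i + 2^n,
   both on the 2k-cycle of f_(n+1) where g acts as a shift by k, would have
   the same image, forcing x_i = x_i + 2^n (mod 2^(n+1)).  Then
   (f^2k)'(x_i) = g'(g x_i) g'(x_i) = a^2 = 1 (mod 4) since g x_i = x_i
   (mod 4).  For the displacements, two Taylor expansions of g (at
   y = x_i + 2^n t and at g y) give 2 b_(n+1) = (b_n + t (a - 1)) (1 + a)
   (mod 4), and (a - 1)(a + 1) = 0 (mod 4) because a is odd. *)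

Lemma pw2_gt0 n : 0 < pw2 n.
Proof. by rewrite /pw2 exprn_gt0. Qed.

Lemma pw2_neq0 n : pw2 n != 0.
Proof. by rewrite gt_eqF // pw2_gt0. Qed.

Lemma pw2S n : pw2 n.+1 = 2 * pw2 n.
Proof. by rewrite /pw2 exprS. Qed.

Lemma z2_at0 (u : Z2) : z2 u 0 = 0.
Proof. by rewrite -z2_norm /pw2 expr0 modz1. Qed.

Lemma modz_mul2 (a : int) n : modz (2 * a) (pw2 n.+1) = 2 * modz a (pw2 n).
Proof.
rewrite {1}(divz_eq a (pw2 n)) pw2S mulrDr mulrCA modzMDl modz_small //.
have r_ge0 := modz_ge0 a (pw2_neq0 n).
have r_lt := ltz_mod a (pw2_neq0 n).
rewrite gtr0_norm ?pw2_gt0 // in r_lt.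
move: r_ge0 r_lt; generalize (pw2 n) (modz a (pw2 n)) => P r; lia.
Qed.

Lemma z2_mul2 (c : Z2) n : z2 (2 * c) n.+1 = 2 * z2 c n.
Proof.
have z2_two : z2 (2 : Z2) n.+1 = modz 2 (pw2 n.+1).
  rewrite [LHS]/= (@modz_small 1) // pw2S.
  by have := pw2_gt0 n; generalize (pw2 n) => P; lia.
rewrite -[LHS]/(modz (z2 2 n.+1 * z2 c n.+1) (pw2 n.+1)).
by rewrite z2_two modzMml modz_mul2 -z2_coh.
Qed.

Lemma lreg2 : GRing.lreg (2 : Z2).
Proof.
move=> u v e; apply: z2_eq => n.
by have := congr1 (z2^~ n.+1) e; rewrite !z2_mul2; lia.
Qed.

Lemma lreg_pow2 m : GRing.lreg (2 ^+ m : Z2).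
Proof. exact: lregX lreg2. Qed.

Lemma z2_mod2 (w : Z2) n : modz (z2 w n.+1) 2 = z2 w 1.
Proof.
elim: n => [|n IH]; first by rewrite -[2]/(pw2 1) z2_norm.
rewrite -IH [z2 w n.+1]z2_coh pw2S.
by rewrite {1}(divz_eq (z2 w n.+2) (2 * pw2 n)) mulrCA (mulrC 2) modzMDl.
Qed.

(* The half of w is built level by level as z2 w (n+1) / 2. *)
Lemma even_Z2 (w : Z2) : z2 w 1 = 0 -> exists c, w = 2 * c.
Proof.
move=> w1.
have wE n : z2 w n.+1 = 2 * (z2 w n.+1 %/ 2)%Z.
  by rewrite mulrC divzK //; apply/dvdz_mod0P; rewrite z2_mod2.
have half_coh : precoh (fun n => (z2 w n.+1 %/ 2)%Z).
  move=> n /=.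
  have -> : z2 w n.+1 = 2 * modz (z2 w n.+2 %/ 2)%Z (pw2 n).
    by rewrite z2_coh {1}(wE n.+1) modz_mul2.
  by rewrite mulKz // modz_mod.
exists (mkZ2 half_coh); apply: z2_eq => -[|n]; first by rewrite !z2_at0.
by rewrite z2_mul2 /= -modz_mul2 -wE z2_norm.
Qed.

Lemma Z2_parity (u : Z2) : exists c, u = 2 * c \/ u = 1 + 2 * c.
Proof.
have u1_ge0 : 0 <= z2 u 1 by rewrite -z2_norm modz_ge0 // pw2_neq0.
have u1_lt2 : z2 u 1 < 2 by have := ltz_mod (z2 u 1) (pw2_neq0 1); rewrite z2_norm.
have [u1|u1] : z2 u 1 = 0 \/ z2 u 1 = 1 by lia.
  by have [c ->] := even_Z2 u1; exists c; left.
have /even_Z2 [c uE] : z2 (u - 1) 1 = 0 by rewrite /= u1.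
by exists c; right; rewrite -uE addrC subrK.
Qed.

Lemma one_neq_even (c : Z2) : 1 <> 2 * c.
Proof. by move=> /(congr1 (z2^~ 1%N)); rewrite z2_mul2 z2_at0. Qed.

Lemma eqm_refl m u : eqm m u u.
Proof. by exists 0; rewrite subrr mulr0. Qed.

Lemma eqm_sym m u v : eqm m u v -> eqm m v u.
Proof. by move=> [c uv]; exists (- c); rewrite mulrN -uv opprB. Qed.

Lemma eqm_trans m u v w : eqm m u v -> eqm m v w -> eqm m u w.
Proof. by move=> [c uv] [d vw]; exists (c + d); rewrite mulrDr -uv -vw addrA subrK. Qed.

Lemma eqm_le m n u v : (m <= n)%N -> eqm n u v -> eqm m u v.
Proof.
move=> /subnKC nE [c uv]; exists (2 ^+ (n - m) * c).
by rewrite uv -{1}nE exprD mulrA.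
Qed.

Lemma horner_add_taylor (R : comNzRingType) (p : {poly R}) (x h : R) :
  exists q, p.[x + h] = p.[x] + h * p^`().[x] + h ^+ 2 * q.
Proof.
elim/poly_ind: p => [|p c [q IH]]; first by exists 0; rewrite deriv0 !horner0; ring.
exists (p^`().[x] + q * (x + h)).
by rewrite derivMXaddC !hornerMXaddC hornerD hornerMX IH; ring.
Qed.

Lemma eqm_horner m (p : {poly Z2}) u v : eqm m u v -> eqm m p.[u] p.[v].
Proof.
move=> [c uv]; have [q pE] := horner_add_taylor p v (u - v).
exists (c * (p^`().[v] + (u - v) * q)).
by rewrite addrC subrK in pE; rewrite pE uv; ring.
Qed.

Lemma fiterD a b f : fiter (a + b) f = fiter a f \Po fiter b f.
Proof.
elim: a => [|a IH]; first by rewrite add0n /= comp_polyX.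
by rewrite addSn /= IH comp_polyA.
Qed.

Section Cycles.

Variables (m K : nat) (f : {poly Z2}) (y : nat -> Z2).
Hypothesis y_cycle : is_cycle m f y K.

Lemma is_cycle_iter l j : (j < K)%N ->
  eqm m (fiter l f).[y j] (y ((j + l) %% K)%N).
Proof.
have [K_gt0 [_ y_step]] := y_cycle.
move=> jK; elim: l => [|l IH]; first by rewrite addn0 modn_small //= hornerX; exact: eqm_refl.
rewrite [fiter _ _]/= horner_comp; apply: eqm_trans (eqm_horner f IH) _.
by have := y_step _ (ltn_pmod (j + l) K_gt0); rewrite -addn1 modnDml addn1 addnS.
Qed.

Lemma is_cycle_iter_inj l j j' : (j < K)%N -> (j' < K)%N ->
  eqm m (fiter l f).[y j] (fiter l f).[y j'] -> j = j'.
Proof.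
have [K_gt0 [y_inj _]] := y_cycle.
move=> jK j'K e.
have := eqm_trans (eqm_sym (is_cycle_iter l jK)) (eqm_trans e (is_cycle_iter l j'K)).
move=> /(y_inj _ _ (ltn_pmod _ K_gt0) (ltn_pmod _ K_gt0)) /eqP.
by rewrite eqn_modDr !modn_small // => /eqP.
Qed.

End Cycles.

Lemma growing_cycle_deriv_odd n f x k i : (0 < n)%N ->
  grows n f x k -> (i < k)%N ->
  exists c, (fiter k f)^`().[x i] = 1 + 2 * c.
Proof.
move=> n_gt0 [y [y_cycle y_lifts]] ik.
set g := fiter k f.
have [c [a_even|]] := Z2_parity g^`().[x i]; last by exists c.
have [j jk xj] : exists2 j, (j < k.*2)%N & eqm n.+1 (x i) (y j).
  by apply/(y_lifts _).1; exists i => //; exact: eqm_refl.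
have [j' j'k xj'] : exists2 j, (j < k.*2)%N & eqm n.+1 (x i + 2 ^+ n) (y j).
  by apply/(y_lifts _).1; exists i => //; exists 1; rewrite addrC addKr mulr1.
have g_shift : eqm n.+1 g.[x i] g.[x i + 2 ^+ n].
  have [q ->] := horner_add_taylor g (x i) (2 ^+ n).
  exists (- (c + 2 ^+ n.-1 * q)).
  by rewrite a_even -(prednK n_gt0) !exprS; ring.
have jj' : j = j'.
  apply: (is_cycle_iter_inj y_cycle jk j'k).
  apply: eqm_trans (eqm_horner g (eqm_sym xj)) _.
  exact: eqm_trans g_shift (eqm_horner g xj').
rewrite -jj' in xj'; have [d xd] := eqm_trans xj (eqm_sym xj').
case: (@one_neq_even (- d)); apply: (@lreg_pow2 n).
by rewrite mulrA -exprSr mulrN -xd; ring.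
Qed.

Lemma deriv_comp_self_mod4 (g : {poly Z2}) x c :
  eqm 2 g.[x] x -> g^`().[x] = 1 + 2 * c -> eqm 2 ((g \Po g)^`()).[x] 1.
Proof.
move=> gx a_odd; have [e g'E] := eqm_horner g^`() gx.
have -> : (g \Po g)^`().[x] = (g^`().[x] + 2 ^+ 2 * e) * g^`().[x].
  by rewrite deriv_comp hornerM horner_comp -g'E addrC subrK.
by exists (c + c ^+ 2 + e * (1 + 2 * c)); rewrite a_odd; ring.
Qed.

Lemma horner_comp_self_displacement n (g : {poly Z2}) y E :
  g.[y] = y + 2 ^+ n * E ->
  exists q, g.[g.[y]] - y = 2 ^+ n * (E * (1 + g^`().[y]) + 2 ^+ n * E ^+ 2 * q).
Proof.
move=> gy; rewrite [in g.[g.[y]]]gy.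
by have [q ->] := horner_add_taylor g y (2 ^+ n * E); exists q; rewrite gy; ring.
Qed.

Lemma displacement_comp_self_mod4 n (g : {poly Z2}) x T c bn bn1 :
  (2 <= n)%N -> g^`().[x] = 1 + 2 * c ->
  2 ^+ n * bn = g.[x] - x ->
  2 ^+ n.+1 * bn1 = g.[g.[x + 2 ^+ n * T]] - (x + 2 ^+ n * T) ->
  eqm 2 (2 * bn1) (bn * (1 + g^`().[x])).
Proof.
move=> n_ge2 a_odd bnE bn1E.
set y := x + 2 ^+ n * T.
have [q1 gyE] := horner_add_taylor g x (2 ^+ n * T).
set E := bn + T * (2 * c) + 2 ^+ n * T ^+ 2 * q1.
have /horner_comp_self_displacement [q2 ggyE] : g.[y] = y + 2 ^+ n * E.
  by rewrite gyE a_odd -[g.[x]](subrK x) -bnE /E /y; ring.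
have {}bn1E : 2 * bn1 = E * (1 + g^`().[y]) + 2 ^+ n * E ^+ 2 * q2.
  by apply: (@lreg_pow2 n); rewrite mulrA -exprSr bn1E ggyE.
have [e g'E] : eqm n g^`().[y] g^`().[x] by apply: eqm_horner; exists T; rewrite addrC addKr.
rewrite bn1E -[g^`().[y]](subrK g^`().[x]) g'E a_odd.
have [m nE] : exists m, n = m.+2 by exists (n - 2)%N; lia.
exists (T * c * (1 + c) + 2 ^+ m * (T ^+ 2 * q1 * (2 + 2 * c) + E * e + E ^+ 2 * q2)).
by rewrite /E nE !exprS; ring.
Qed.

Theorem lemma3p4 (f : {poly Z2}) (n k : nat) (x : nat -> Z2) :
  (2 <= n)%N ->
  is_cycle n f x k ->
  grows n f x k ->
  forall i : nat, (i < k)%N ->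
    eqm 2 ((fiter (k.*2) f)^`()).[x i] 1 /\
    (forall (t : bool) (bn bn1 : Z2),
       2 ^+ n * bn = (fiter k f).[x i] - x i ->
       2 ^+ n.+1 * bn1 = (fiter (k.*2) f).[x i + 2 ^+ n *+ t]
                         - (x i + 2 ^+ n *+ t) ->
       eqm 2 (2 * bn1) (bn * (1 + ((fiter k f)^`()).[x i]))).
Proof.
move=> n_ge2 x_cycle x_grows i ik.
set g := fiter k f.
have gx : eqm n g.[x i] (x i).
  by have := is_cycle_iter x_cycle k ik; rewrite modnDr modn_small.
have [c a_odd] := growing_cycle_deriv_odd (ltnW n_ge2) x_grows ik.
have -> : fiter k.*2 f = g \Po g by rewrite -addnn fiterD.
split; first exact: deriv_comp_self_mod4 (eqm_le n_ge2 gx) a_odd.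
move=> t bn bn1 bnE; rewrite horner_comp -[2 ^+ n *+ t]mulr_natr.
exact: displacement_comp_self_mod4 n_ge2 a_odd bnE.
Qed.
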